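(* Every finite tree is a compact visibility graph.
   Context: Given a family of pairwise disjoint nonempty connected subsets (''regions'') of $\mathbb{R}^2$, a sightline is a closed line segment $\overline{ab}$ with $a\in A$, $b\in B$ for two different regions $A\neq B$ of the family, such that the segment intersects no region of the family other than $A$ and $B$. A graph $G$ is a compact visibility graph if there is such a family of compact connected nonempty regions, one for each vertex of $G$, such that two distinct vertices are adjacent in $G$ if and only if there is a sightline between their regions. *)

From HB Require Import structures.
From mathcomp Require Import all_boot all_order all_algebra.
From mathcomp Require Import all_classical all_reals all_analysis.
Set Implicit Arguments. Unset Strict Implicit. Unset Printing Implicit Defensive.
Import Order.TTheory GRing.Theory Num.Theory.
Import numFieldNormedType.Exports.
Local Open Scope classical_set_scope.
Local Open Scope ring_scope.

Definition segment {R : realType} (a b : R * R) : set (R * R) :=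
  [set p | exists2 t : R, 0 <= t <= 1 &
     p = ((1 - t) * a.1 + t * b.1, (1 - t) * a.2 + t * b.2)].

Definition has_sightline {R : realType} {V : Type} (A : V -> set (R * R))
  (v w : V) : Prop :=
  exists a b, A v a /\ A w b /\
    forall u, u <> v -> u <> w -> segment a b `&` A u = set0.

Definition compact_visibility_graph {R : realType} (V : finType) (e : rel V) : Prop :=
  exists A : V -> set (R * R),
    (forall v, compact (A v) /\ connected (A v) /\ A v !=set0) /\
    (forall v w, v <> w -> A v `&` A w = set0) /\
    (forall v w, v <> w -> (e v w <-> has_sightline A v w)).

Definition simple_graph {V : finType} (e : rel V) : Prop :=
  symmetric e /\ irreflexive e.

Definition graph_connected {V : finType} (e : rel V) : Prop :=
  forall x y, connect e x y.

Definition acyclic {V : finType} (e : rel V) : Prop :=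
  forall c : seq V, ucycle e c -> (size c < 3)%N.

Definition is_tree {V : finType} (e : rel V) : Prop :=
  simple_graph e /\ (0 < #|V|)%N /\ graph_connected e /\ acyclic e.

From HB Require Import structures.
From mathcomp Require Import all_boot all_order all_algebra.
From mathcomp Require Import all_classical all_reals all_analysis.
From mathcomp Require Import zify ring lra.
Set Implicit Arguments. Unset Strict Implicit. Unset Printing Implicit Defensive.

(* Root the tree at r.  Every vertex v gets a comb: a horizontal bar at height
   depth_bound - depth v, from which #|V| + 1 teeth hang down to the x-axis.  The
   children of v sit one level lower, each in its own gap between two consecutive
   teeth, so the x-range of a vertex is a base-(#|V| + 2) subinterval of the x-range
   of its parent.  A child sees its parent straight up.  A segment from the comb of
   u to that of a non-neighbour of no greater depth must leave the box formed by
   the gap of u under the bar of its parent, whose walls are two teeth and the bar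
   of the parent comb, so it is blocked.
   The parent and depth functions come from growing a rooted subtree one vertex at
   a time; acyclicity makes the new vertex have a single neighbour in the subtree. *)

Definition tree_edge {V : finType} (r : V) (p : V -> V) : rel V :=
  [rel u w | (u != r) && (p u == w) || (w != r) && (p w == u)].

Section RootedTree.
Variables (V : finType) (e : rel V).
Hypotheses (e_sym : symmetric e) (e_irr : irreflexive e) (e_acyc : acyclic e).

Definition induced (S : {set V}) : rel V := [rel a b | [&& e a b, a \in S & b \in S]].

Lemma induced_sym S : symmetric (induced S).
Proof. by move=> a b; rewrite /induced /= e_sym [(a \in S) && _]andbC. Qed.

Lemma path_induced_sub S a q : path (induced S) a q -> {subset q <= S}.
Proof.
elim: q a => //= b q IH a /andP[/and3P[_ _ bS] /IH qS] x.
by rewrite inE => /orP[/eqP->|/qS].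
Qed.

Lemma acyclic_neighbour_uniq (S : {set V}) x y w :
  x \notin S -> connect (induced S) y w -> e y x -> e x w -> w = y.
Proof.
move=> xS /connectP[q pq ->{w}] eyx.
case: (shortenP pq) => [[|b q']] pyq uyq _ ex_last //; exfalso.
have yS : y \in S by case/andP: pyq => /and3P[].
have q'S := path_induced_sub pyq.
have x_out : x \notin [:: y, b & q'].
  by rewrite inE negb_or; apply/andP; split; [apply: contraNneq xS => ->|apply: contra xS => /q'S].
have /= /andP[eyb pbq] : path e y (b :: q') by apply: sub_path pyq => u v /andP[].
have := @e_acyc [:: x, y, b & q'].
by rewrite /ucycle /= rcons_path (e_sym x y) eyx [e _ x]e_sym ex_last x_out eyb pbq => /(_ uyq).
Qed.

Definition rooted_subtree r (S : {set V}) (p : V -> V) (d : V -> nat) :=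
  [/\ r \in S, d r = 0,
      forall v, v \in S -> v != r -> [/\ p v \in S, d v = (d (p v)).+1 & e (p v) v] &
      forall u w, u \in S -> w \in S -> e u w -> tree_edge r p u w].

Lemma rooted_subtree_connect r S p d v :
  rooted_subtree r S p d -> v \in S -> connect (induced S) v r.
Proof.
case=> _ _ par _; have [k] := ubnP (d v); elim: k v => // k IH v dvk vS.
have [->|vr] := eqVneq v r; first exact: connect0.
have [pvS dv epv] := par v vS vr.
have step : induced S v (p v) by rewrite /induced /= vS pvS e_sym epv.
by apply: connect_trans (connect1 step) (IH _ _ pvS); rewrite -ltnS -dv.
Qed.

Lemma connect_exit_edge (S : {set V}) a b :
  a \in S -> b \notin S -> connect e a b -> exists y x, [/\ y \in S, x \notin S & e y x].
Proof.
move=> aS bS /connectP[q]; elim: q a aS => [|c q IH] a aS /=.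
  by move=> _ eb; rewrite eb aS in bS.
case/andP=> eac pq lq; have [cS|cS] := boolP (c \in S); first exact: IH cS pq lq.
by exists a, c.
Qed.

Hypothesis e_conn : graph_connected e.

Lemma rooted_subtree_grow r S p d : rooted_subtree r S p d -> #|S| < #|V| ->
  exists (S' : {set V}) (p' : V -> V) (d' : V -> nat),
    #|S'| = #|S|.+1 /\ rooted_subtree r S' p' d'.
Proof.
move=> T ltSV; have [rS dr par edges] := T.
have [v vS] : exists v, v \notin S.
  apply/existsP; apply: contraTT ltSV => /existsPn allS.
  rewrite -leqNgt -cardsT; apply/subset_leq_card/fintype.subsetP => x _; exact/negPn/allS.
have [y [x [yS xS eyx]]] := connect_exit_edge rS vS (e_conn r v).
have xr : x != r by apply: contraNneq xS => ->.
have uniq_nb w : w \in S -> e x w -> w = y.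
  move=> wS; apply: acyclic_neighbour_uniq xS _ eyx.
  have toR z : z \in S -> connect (induced S) z r := rooted_subtree_connect T.
  by apply: connect_trans (toR y yS) _; rewrite (sym_connect_sym (induced_sym S)) toR.
exists (x |: S), (fun z => if z == x then y else p z),
  (fun z => if z == x then (d y).+1 else d z).
split; first by rewrite cardsU1 xS.
have yx : y != x by apply: contraNneq xS => <-.
split=> [|||u w]; rewrite ?inE ?rS ?orbT ?(eq_sym r x) ?(negbTE xr) //.
- move=> z; have [-> _ _|zx] := eqVneq z x.
    by rewrite (negbTE yx) inE yS orbT.
  rewrite !inE (negbTE zx) /= => zS zr; have [pzS -> epz] := par z zS zr.
  have pzx : p z != x by apply: contraNneq xS => <-.
  by rewrite (negbTE pzx) pzS orbT.
- have [->|ux] := eqVneq u x; have [->|wx] := eqVneq w x;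
    rewrite /tree_edge /= ?e_irr //.
  + by move=> _ wS /(uniq_nb w wS) ->; rewrite eqxx /= xr eqxx.
  + by move=> uS _; rewrite e_sym => /(uniq_nb u uS) ->; rewrite eqxx /= xr eqxx orbT.
  + by rewrite (negbTE ux) (negbTE wx); exact: edges.
Qed.

Lemma rooted_spanning_tree r : exists p d, rooted_subtree r [set: V]%SET p d.
Proof.
have grow k : 0 < k <= #|V| ->
    exists (S : {set V}) (p : V -> V) (d : V -> nat), #|S| = k /\ rooted_subtree r S p d.
  elim: k => [//|[|k] IH] /andP[_ kV].
    exists [set r], id, (fun _ => 0); split; first exact: cards1.
    split=> [||v|u w]; rewrite ?inE ?eqxx //; first by move=> ->.
    by move=> /eqP-> /eqP->; rewrite e_irr.
  have [S [p [d [cS T]]]] := IH (ltnW kV).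
  have := rooted_subtree_grow T; rewrite cS => /(_ kV) [S' [p' [d' [cS' T']]]].
  by exists S', p', d'.
have [|S [p [d [cardS T]]]] := grow #|V|; first by rewrite leqnn andbT; apply/card_gt0P; exists r.
have /eqP ST : S == [set: V]%SET by rewrite eqEcard finset.subsetT cardsT cardS leqnn.
by exists p, d; rewrite -ST.
Qed.

Lemma tree_parent_depth r : exists (p : V -> V) (d : V -> nat),
  [/\ d r = 0, forall v, v != r -> d v = (d (p v)).+1 & e =2 tree_edge r p].
Proof.
have [p [d [_ dr par edges]]] := rooted_spanning_tree r.
exists p, d; split=> // [v vr|u w]; first by have [] := par v (finset.in_setT v) vr.
apply/idP/idP; first exact: edges (finset.in_setT u) (finset.in_setT w).
by case/orP=> /andP[ur /eqP <-]; have [_ _] := par _ (finset.in_setT _) ur; rewrite // e_sym.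
Qed.
End RootedTree.

Import Order.TTheory GRing.Theory Num.Theory.
Import numFieldNormedType.Exports.
Local Open Scope classical_set_scope.
Local Open Scope ring_scope.

Section Plane.
Variable R : realType.

Lemma segment_sym (a b : R * R) : segment a b = segment b a.
Proof.
suff sub (u v : R * R) : segment u v `<=` segment v u by apply/seteqP; split; apply: sub.
move=> q [t t01 ->]; case/andP: t01 => t0 t1.
exists (1 - t); first by apply/andP; split; lra.
by congr (_, _); ring.
Qed.

Lemma segment_snd_ge0 (a b c : R * R) : 0 <= a.2 -> 0 <= b.2 -> segment a b c -> 0 <= c.2.
Proof.
move=> a0 b0 [t /andP[t0 t1] ->] /=.
by rewrite addr_ge0 ?mulr_ge0 // subr_ge0.
Qed.

Lemma has_sightline_sym (V : Type) (A : V -> set (R * R)) v w :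
  has_sightline A v w -> has_sightline A w v.
Proof.
move=> [a [b [Aa [Ab clear]]]]; exists b, a; do 2!split=> //.
by move=> u uw uv; rewrite segment_sym; exact: clear.
Qed.

Lemma lerp_continuous (u v : R) : continuous (fun t : R => (1 - t) * u + t * v).
Proof.
move=> t; apply: cvgD; apply: cvgM; try exact: cvg_cst; try exact: cvg_id.
by apply: cvgB; [exact: cvg_cst|exact: cvg_id].
Qed.

Lemma segment_exits_box (a b : R * R) (x1 x2 y1 y2 : R) :
  x1 < a.1 < x2 -> y1 < a.2 < y2 -> ~ (x1 < b.1 < x2 /\ y1 < b.2 < y2) ->
  exists2 c, segment a b c &
    [/\ x1 <= c.1 <= x2, y1 <= c.2 <= y2 & [\/ c.1 = x1, c.1 = x2, c.2 = y1 | c.2 = y2]].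
Proof.
move=> /andP[ax1 ax2] /andP[ay1 ay2] b_out.
pose z1 t := (1 - t) * a.1 + t * b.1; pose z2 t := (1 - t) * a.2 + t * b.2.
pose phi := ((fun t => z1 t - x1) \min (fun t => x2 - z1 t)) \min
            ((fun t => z2 t - y1) \min (fun t => y2 - z2 t)).
have phi_cont : continuous phi.
  have subl (f : R -> R) (k : R) : continuous f -> continuous (fun t : R => f t - k).
    by move=> cf t; apply: cvgB; [exact: cf|exact: cvg_cst].
  have subr (f : R -> R) (k : R) : continuous f -> continuous (fun t : R => k - f t).
    by move=> cf t; apply: cvgB; [exact: cvg_cst|exact: cf].
  have cz1 := @lerp_continuous a.1 b.1; have cz2 := @lerp_continuous a.2 b.2.
  by apply: min_fun_continuous; apply: min_fun_continuous; auto.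
have phi0 : 0 < phi 0.
  by rewrite /phi /z1 /z2 /= !lt_min !subr0 !mul1r !mul0r !addr0 !subr_gt0 ax1 ax2 ay1 ay2.
have phi1 : phi 1 <= 0.
  rewrite leNgt; apply/negP => pos; apply: b_out; move: pos.
  rewrite /phi /z1 /z2 /= !lt_min !subrr !mul1r !mul0r !add0r !subr_gt0.
  by move=> /andP[/andP[-> ->] /andP[-> ->]].
have [t t01 phit] : exists2 t, t \in `[0, 1] & phi t = 0.
  apply: IVT => //; first exact: continuous_subspaceT.
  by rewrite ge_min le_max phi1 (ltW phi0) orbT.
move: t01; rewrite in_itv /= => t01.
exists (z1 t, z2 t); first by exists t.
have : 0 <= phi t <= 0 by rewrite phit lexx.
rewrite /phi /= le_min !ge_min !le_min !subr_ge0 !subr_le0.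
move=> /andP[/andP[/andP[h1 h2] /andP[h3 h4]] on_side]; split; rewrite ?h1 ?h2 ?h3 ?h4 //.
by case/orP: on_side => /orP[] h; [constructor 1|constructor 2|constructor 3|constructor 4]; lra.
Qed.

Lemma image_itv_compact_connected (f : R -> R * R) (s1 s2 : R) : continuous f ->
  compact (f @` `[s1, s2]) /\ connected (f @` `[s1, s2]).
Proof.
move=> cf; split.
  by apply: continuous_compact; [exact: continuous_subspaceT|exact: segment_compact].
apply: connected_continuous_connected (continuous_subspaceT cf).
exact/connected_intervalP/interval_is_interval.
Qed.

Definition hseg (x1 x2 y : R) : set (R * R) := [set q | x1 <= q.1 <= x2 /\ q.2 = y].
Definition vseg (x y1 y2 : R) : set (R * R) := [set q | q.1 = x /\ y1 <= q.2 <= y2].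

Lemma hsegE (x1 x2 y : R) : hseg x1 x2 y = (fun s => (s, y)) @` `[x1, x2].
Proof.
rewrite /hseg; apply/seteqP; split=> [[s _] /= [sx ->]|_ [s /= sx <-] /=].
  by exists s; rewrite ?in_itv.
by move: sx; rewrite in_itv /= => ->.
Qed.

Lemma vsegE (x y1 y2 : R) : vseg x y1 y2 = (fun s => (x, s)) @` `[y1, y2].
Proof.
rewrite /vseg; apply/seteqP; split=> [[_ s] /= [-> sy]|_ [s /= sy <-] /=].
  by exists s; rewrite ?in_itv.
by move: sy; rewrite in_itv /= => ->.
Qed.

Lemma hseg_compact_connected (x1 x2 y : R) :
  compact (hseg x1 x2 y) /\ connected (hseg x1 x2 y).
Proof.
by rewrite hsegE; apply: image_itv_compact_connected => s; exact: cvg_pair cvg_id (cvg_cst y).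
Qed.

Lemma vseg_compact_connected (x y1 y2 : R) :
  compact (vseg x y1 y2) /\ connected (vseg x y1 y2).
Proof.
by rewrite vsegE; apply: image_itv_compact_connected => s; exact: cvg_pair (cvg_cst x) cvg_id.
Qed.
End Plane.

Section CombRegions.
Variables (R : realType) (V : finType) (r : V) (p : V -> V) (d : V -> nat).
Hypotheses (d_root : d r = 0%N) (d_parent : forall v, v != r -> d v = (d (p v)).+1).

Definition base := #|V|.+2.
Definition depth_bound := (\max_(v : V) d v).+1.
Definition width k := (base ^ (depth_bound - k))%N.
Definition slot (v : V) := (enum_rank v).+1.

(* The base-[base] digits of [code v] are the slots of the vertices on the path
   from the root to v, so the cell of a child u of v is the gap between the teeth
   [slot u] and [slot u + 1] of the comb of v. *)
Fixpoint code_rec k v := if k is k'.+1 then (base * code_rec k' (p v) + slot v)%N else 0%N.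
Definition code v := code_rec (d v) v.

Definition cell_lo v : R := (code v * width (d v))%:R.
Definition cell_hi v : R := ((code v).+1 * width (d v))%:R.
Definition in_cell v (x : R) := cell_lo v < x < cell_hi v.

Definition tooth_x v k : R := ((base * code v + k) * width (d v).+1)%:R.
Definition level v : R := (depth_bound - d v)%:R.
Definition comb_bar v := hseg (tooth_x v 1) (tooth_x v #|V|.+1) (level v).
Definition comb_tooth v k := vseg (tooth_x v k) 0 (level v).
Definition comb v := \bigcup_(k in [set` iota 1 #|V|.+1]) (comb_bar v `|` comb_tooth v k).

Lemma mem_teeth k : (k \in iota 1 #|V|.+1) = (1 <= k <= #|V|.+1)%N.
Proof. by rewrite mem_iota add1n ltnS. Qed.

Lemma depth_lt_bound v : (d v < depth_bound)%N.
Proof. by rewrite ltnS; exact: leq_bigmax. Qed.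

Lemma width_gt0 k : (0 < width k)%N.
Proof. by rewrite expn_gt0. Qed.

Lemma widthS k : (k < depth_bound)%N -> width k = (base * width k.+1)%N.
Proof. by move=> lt_k; rewrite /width -expnS subnSK. Qed.

Lemma slot_le v : (slot v <= #|V|)%N.
Proof. exact: ltn_ord. Qed.

Lemma depth0_root v : d v = 0%N -> v = r.
Proof. by move=> dv0; apply/eqP/negPn/negP => /d_parent; rewrite dv0. Qed.

Lemma code_root : code r = 0%N.
Proof. by rewrite /code d_root. Qed.

Lemma code_parent v : v != r -> code v = (base * code (p v) + slot v)%N.
Proof. by move=> vr; rewrite /code (d_parent vr). Qed.

Lemma code_inj : injective code.
Proof.
have code_mod v : (code v %% base)%N = if v == r then 0%N else slot v.
  have [->|vr] := eqVneq v r; first by rewrite code_root.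
  by rewrite code_parent // mulnC modnMDl modn_small // ltnS ltnW // ltnS slot_le.
move=> u w /(congr1 (modn^~ base)); rewrite !code_mod.
have [->|ur] := eqVneq u r; have [->|wr] := eqVneq w r => //.
by move=> /succn_inj /ord_inj /enum_rank_inj.
Qed.

Lemma tooth_x_mono v : {homo tooth_x v : k1 k2 / (k1 <= k2)%N >-> k1 <= k2}.
Proof. by move=> k1 k2 le_k; rewrite ler_nat leq_mul2r leq_add2l le_k orbT. Qed.

Lemma tooth_x_in_cell v k : (1 <= k <= #|V|.+1)%N -> in_cell v (tooth_x v k).
Proof.
move=> k_bd; rewrite /in_cell /cell_lo /cell_hi /tooth_x !ltr_nat (widthS (depth_lt_bound v)).
have := width_gt0 (d v).+1; rewrite /base; nia.
Qed.

Lemma parent_teeth u : u != r ->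
  tooth_x (p u) (slot u) = cell_lo u /\ tooth_x (p u) (slot u).+1 = cell_hi u.
Proof. by move=> ur; rewrite /tooth_x /cell_lo /cell_hi (code_parent ur) (d_parent ur) addnS. Qed.

Lemma parent_bar_covers_cell u x : u != r -> cell_lo u <= x <= cell_hi u ->
  tooth_x (p u) 1 <= x <= tooth_x (p u) #|V|.+1.
Proof.
move=> ur; have [<- <-] := parent_teeth ur => /andP[lo hi].
rewrite (le_trans _ lo) ?(le_trans hi) ?tooth_x_mono //.
by rewrite ltnS slot_le.
Qed.

Lemma in_cell_parent u x : u != r -> in_cell u x -> in_cell (p u) x.
Proof.
move=> ur /andP[lo hi].
have /andP[lo_p _] := @tooth_x_in_cell (p u) 1%N isT.
have /andP[_ hi_p] := @tooth_x_in_cell (p u) #|V|.+1 (leqnn _).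
have /andP[lo' hi'] := parent_bar_covers_cell ur (introT andP (conj (ltW lo) (ltW hi))).
by rewrite /in_cell (lt_le_trans lo_p lo') (le_lt_trans hi' hi_p).
Qed.

Lemma level_parent u : u != r -> level (p u) = level u + 1.
Proof.
move=> ur; rewrite /level natr1; congr (_%:R).
by have := depth_lt_bound u; rewrite (d_parent ur); lia.
Qed.

Lemma level_lt u w : (d w < d u)%N -> level u + 1 <= level w.
Proof. by move=> lt_wu; rewrite /level natr1 ler_nat; have := depth_lt_bound u; lia. Qed.

Lemma not_in_cell_multiple v m : ~~ in_cell v (m * width (d v))%:R.
Proof. by rewrite /in_cell /cell_lo /cell_hi !ltr_nat !ltn_pmul2r ?width_gt0 //; lia. Qed.

Lemma in_cell_same_depth u w x : d u = d w -> in_cell u x -> in_cell w x -> u = w.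
Proof.
rewrite /in_cell /cell_lo /cell_hi => duw /andP[lo_u hi_u] /andP[lo_w hi_w]; apply: code_inj.
have := lt_trans lo_u hi_w; have := lt_trans lo_w hi_u.
by rewrite duw !ltr_nat !ltn_pmul2r ?width_gt0 //; lia.
Qed.

Lemma comb_barW v : comb_bar v `<=` comb v.
Proof. by move=> q bq; exists 1%N; [rewrite /= mem_teeth|left]. Qed.

Lemma comb_toothW v k : (1 <= k <= #|V|.+1)%N -> comb_tooth v k `<=` comb v.
Proof. by move=> k_bd q tq; exists k; [rewrite /= mem_teeth|right]. Qed.

Lemma comb_bar_corner v : comb_bar v (tooth_x v 1, level v).
Proof. by split; rewrite //= lexx tooth_x_mono. Qed.

Lemma comb_point v q : comb v q ->
  [/\ 0 <= q.2 <= level v, in_cell v q.1 &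
      q.2 < level v -> exists m, q.1 = (m * width (d v).+1)%:R].
Proof.
case=> k /=; rewrite mem_teeth => k_bd [[/andP[lo hi] ->]|[-> lv]]; last first.
  by split=> //; [exact: tooth_x_in_cell|exists (base * code v + k)%N].
split=> [||]; rewrite ?ltxx ?lexx ?ler0n //.
have /andP[lo_v _] := @tooth_x_in_cell v 1%N isT.
have /andP[_ hi_v] := @tooth_x_in_cell v #|V|.+1 (leqnn _).
by rewrite /in_cell (lt_le_trans lo_v lo) (le_lt_trans hi hi_v).
Qed.

(* At equal depth, distinct cells are disjoint; a shallower comb reaches below its
   bar only through teeth, which lie on a grid coarser than the cell of u. *)
Lemma comb_avoids_cell u w q : w != u -> (d w <= d u)%N -> comb w q -> q.2 < level u + 1 ->
  ~~ in_cell u q.1.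
Proof.
move=> wu + wq q_low; have [_ w_cell grid] := comb_point wq.
rewrite leq_eqVlt => /orP[/eqP eq_wu|lt_wu].
  by apply: contra wu => u_cell; rewrite (in_cell_same_depth eq_wu w_cell u_cell).
have [m ->] := grid (lt_le_trans q_low (level_lt lt_wu)).
suff -> : width (d w).+1 = (base ^ (d u - (d w).+1) * width (d u))%N.
  by rewrite mulnA not_in_cell_multiple.
rewrite /width -expnD; congr (_ ^ _)%N; have := depth_lt_bound u; lia.
Qed.

Lemma comb_compact v : compact (comb v).
Proof.
rewrite /comb bigcup_seq; apply: bigsetU_compact => k _.
exact: compactU (hseg_compact_connected _ _ _).1 (vseg_compact_connected _ _ _).1.
Qed.

Lemma comb_connected v : connected (comb v).
Proof.
apply: bigcup_connected => [|k].
  by exists (tooth_x v 1, level v) => k _; left; exact: comb_bar_corner.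
rewrite /= mem_teeth => k_bd; apply: connectedU.
- exists (tooth_x v k, level v); split; last by split; rewrite //= lexx ler0n.
  by split; rewrite //= !tooth_x_mono //; case/andP: k_bd.
- exact: (hseg_compact_connected _ _ _).2.
- exact: (vseg_compact_connected _ _ _).2.
Qed.

Lemma comb_nonempty v : comb v !=set0.
Proof. by exists (tooth_x v 1, level v); apply/comb_barW/comb_bar_corner. Qed.

Lemma comb_disjoint v w : v != w -> comb v `&` comb w = set0.
Proof.
wlog le_vw : v w / (d v <= d w)%N.
  move=> wlog_vw vw; have [le|/ltnW le] := leqP (d v) (d w); first exact: wlog_vw.
  by rewrite setIC wlog_vw // eq_sym.
move=> vw; apply/seteqP; split=> // q [vq wq].
have [/andP[_ q_low] w_cell _] := comb_point wq.
by move: w_cell; apply/negP/(comb_avoids_cell vw le_vw vq); rewrite ltr_pwDr.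
Qed.

(* The box is the cell of u below the bar of p u: its sides are the teeth [slot u]
   and [slot u + 1] of p u, its top lies on the bar of p u. *)
Lemma segment_leaving_cell_meets_parent u a b : u != r -> comb u a -> 0 <= b.2 ->
  ~ (in_cell u b.1 /\ b.2 < level (p u)) -> exists2 c, segment a b c & comb (p u) c.
Proof.
move=> ur ua b_ge0 b_out; have [/andP[a_ge0 a_le] a_cell _] := comb_point ua.
have a_box : -1 < a.2 < level (p u) by rewrite (level_parent ur); apply/andP; split; lra.
have b_box : ~ (in_cell u b.1 /\ -1 < b.2 < level (p u)).
  by case=> b_cell /andP[_ b_lt]; exact: b_out.
have [c abc [c1 /andP[_ c2_le] side]] := segment_exits_box a_cell a_box b_box.
exists c => //; have c_ge0 := segment_snd_ge0 a_ge0 b_ge0 abc.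
have [lo hi] := parent_teeth ur; have slot_bd := slot_le u.
case: side => c_side.
- apply: (@comb_toothW _ (slot u)); first by apply/andP; split; last exact: leqW.
  by split; rewrite /= ?lo ?c_ge0.
- apply: (@comb_toothW _ (slot u).+1); first by apply/andP; split.
  by split; rewrite /= ?hi ?c_ge0.
- by move: c_ge0; rewrite c_side; lra.
- by apply: comb_barW; split; [exact: parent_bar_covers_cell|].
Qed.

Lemma no_sightline_off_tree u w : u != w -> (d w <= d u)%N -> ~~ tree_edge r p u w ->
  ~ has_sightline comb u w.
Proof.
move=> uw le_wu off [a [b [ua [wb clear]]]].
have ur : u != r.
  by apply: contraNneq uw => ur; move: le_wu; rewrite ur d_root leqn0 => /eqP /depth0_root ->.
have pu_u : p u <> u by move=> pu; have := d_parent ur; rewrite pu => /n_Sn.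
have pu_w : p u <> w by move=> pu; move: off; rewrite /tree_edge /= ur pu eqxx.
have [/andP[b_ge0 _] _ _] := comb_point wb.
have b_out : ~ (in_cell u b.1 /\ b.2 < level (p u)).
  case=> b_cell b_low; move: b_cell; apply/negP.
  by apply: comb_avoids_cell wb _; rewrite 1?eq_sym // -level_parent.
have [c abc puc] := segment_leaving_cell_meets_parent ur ua b_ge0 b_out.
by move/seteqP: (clear _ pu_u pu_w) => [/(_ c (conj abc puc))].
Qed.

Lemma sightline_to_parent u : u != r -> has_sightline comb u (p u).
Proof.
move=> ur; pose x0 := tooth_x u 1.
have x0_cell : in_cell u x0 := @tooth_x_in_cell u 1%N isT.
have /andP[x0_lo x0_hi] := x0_cell.
exists (x0, level u), (x0, level (p u)); split; first exact/comb_barW/comb_bar_corner.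
split.
  by apply: comb_barW; split=> //=; apply: parent_bar_covers_cell; rewrite ?ltW.
move=> z /eqP zu /eqP zpu; apply/seteqP; split=> // _ [[t /andP[t0 t1] ->]].
have -> : (1 - t) * x0 + t * x0 = x0 by ring.
have -> : (1 - t) * level u + t * level (p u) = level u + t by rewrite (level_parent ur); ring.
move=> zq; have [/andP[_ /= q_le] _ _] := comb_point zq.
case: (ltngtP (d z) (d u)) => [lt_zu|lt_uz|eq_zu].
- have: ~~ in_cell (p u) x0.
    apply: comb_avoids_cell zq _ => //; first by rewrite -ltnS -d_parent.
    by rewrite /= (level_parent ur); lra.
  by rewrite in_cell_parent.
- by have := level_lt lt_uz; lra.
- have: ~~ in_cell u x0.
    apply: comb_avoids_cell zq _ => //; first by rewrite eq_zu.
    by move: q_le; rewrite /= /level eq_zu -/(level u); lra.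
  by rewrite x0_cell.
Qed.

Theorem tree_edge_visibility : @compact_visibility_graph R V (tree_edge r p).
Proof.
exists comb; split.
  by move=> v; split; [exact: comb_compact|split; [exact: comb_connected|exact: comb_nonempty]].
split=> [v w /eqP|v w /eqP vw]; first exact: comb_disjoint.
split=> [|sight].
  case/orP=> /andP[ur /eqP <-]; first exact: sightline_to_parent ur.
  exact: has_sightline_sym (sightline_to_parent ur).
apply/negPn/negP => off.
wlog le_wv : v w vw off sight / (d w <= d v)%N.
  move=> wlog_vw; have [le|/ltnW le] := leqP (d w) (d v).
    exact: wlog_vw vw off sight le.
  apply: wlog_vw (has_sightline_sym sight) le; first by rewrite eq_sym.
  by move: off; rewrite /tree_edge /= orbC.
exact: no_sightline_off_tree vw le_wv off sight.
Qed.
End CombRegions.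

Theorem corollary2 (R : realType) (V : finType) (e : rel V) :
  is_tree e -> @compact_visibility_graph R V e.
Proof.
case=> [[e_sym e_irr] [/card_gt0P [r _] [e_conn e_acyc]]].
have [p [d [d_root d_parent e_tree]]] := tree_parent_depth e_sym e_irr e_acyc e_conn r.
have -> : e = tree_edge r p by apply/funext => u; apply/funext => w; exact: e_tree.
exact: tree_edge_visibility d_root d_parent.
Qed.
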